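(* Let $\alpha,\beta,\gamma,\delta,\epsilon$ be the angles of the prototile of an edge-to-edge tiling of the sphere by congruent $a^4b$-pentagons. Then $$\big[(1-\cos\beta)\sin(\delta-\tfrac12\alpha)-(1-\cos\gamma)\sin(\epsilon-\tfrac12\alpha)\big]\sin\tfrac12(\delta-\epsilon)-\big[1-\cos(\beta-\gamma)\big]\sin\tfrac12\alpha\,\sin\tfrac12(\delta+\epsilon)=0.$$
   Context: An $a^4b$-pentagon is a simple spherical pentagon on the unit sphere with four edges of length $a$ and one edge of length $b\neq a$; $\alpha$ is the vertex opposite the $b$-edge, $\beta,\gamma$ are adjacent to $\alpha$, $\delta$ is the endpoint of the $b$-edge adjacent to $\beta$, and $\epsilon$ the endpoint of the $b$-edge adjacent to $\gamma$. Tiles are congruent copies, mirror images allowed. *)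

From Stdlib Require Import Reals Lra.
Open Scope R_scope.

Record V3 := mkV { vx : R; vy : R; vz : R }.

Definition add (u v : V3) := mkV (vx u + vx v) (vy u + vy v) (vz u + vz v).
Definition sub (u v : V3) := mkV (vx u - vx v) (vy u - vy v) (vz u - vz v).
Definition scale (s : R) (u : V3) := mkV (s * vx u) (s * vy u) (s * vz u).
Definition opp (u : V3) := scale (-1) u.
Definition dot (u v : V3) := vx u * vx v + vy u * vy v + vz u * vz v.
Definition cross (u v : V3) :=
  mkV (vy u * vz v - vz u * vy v) (vz u * vx v - vx u * vz v) (vx u * vy v - vy u * vx v).
Definition norm (u : V3) := sqrt (dot u u).

Definition on_sphere (x : V3) : Prop := dot x x = 1.

Definition sdist (u v : V3) : R := acos (dot u v).

(* minor great arc between non-antipodal points u, v of the sphere *)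
Definition arc (u v : V3) (x : V3) : Prop :=
  on_sphere x /\ exists s t, 0 <= s /\ 0 <= t /\ x = add (scale s u) (scale t v).

(* Convention: vertex 0 = alpha, 1 = beta, 2 = delta, 3 = epsilon, 4 = gamma;
   the pentagon (region) is the side lying to the LEFT of the boundary walk
   0 -> 1 -> 2 -> 3 -> 4 -> 0, seen from outside the sphere. *)
Definition vtx (p : nat -> V3) (i : nat) : V3 := p (Nat.modulo i 5).

Definition edge (p : nat -> V3) (i : nat) : V3 -> Prop := arc (vtx p i) (vtx p (S i)).

Definition boundary (p : nat -> V3) (x : V3) : Prop :=
  exists i, (i < 5)%nat /\ edge p i x.

Definition simple_pentagon (p : nat -> V3) : Prop :=
  (forall i, (i < 5)%nat -> on_sphere (vtx p i)) /\
  (forall i j, (i < 5)%nat -> (j < 5)%nat -> i <> j -> vtx p i <> vtx p j) /\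
  (forall i, (i < 5)%nat -> vtx p (S i) <> opp (vtx p i)) /\
  (forall i x, (i < 5)%nat -> edge p i x -> edge p (S i) x -> x = vtx p (S i)) /\
  (forall i x, (i < 5)%nat -> edge p i x -> edge p (S (S i)) x -> False).

Definition a4b_pentagon (p : nat -> V3) (a b : R) : Prop :=
  simple_pentagon p /\
  sdist (vtx p 0) (vtx p 1) = a /\ sdist (vtx p 1) (vtx p 2) = a /\
  sdist (vtx p 2) (vtx p 3) = b /\ sdist (vtx p 3) (vtx p 4) = a /\
  sdist (vtx p 4) (vtx p 0) = a /\ b <> a.

Definition pconn (S : V3 -> Prop) (x y : V3) : Prop :=
  exists f : R -> V3, f 0 = x /\ f 1 = y /\
    (forall t, 0 <= t <= 1 -> S (f t)) /\
    continuity (fun t => vx (f t)) /\ continuity (fun t => vy (f t)) /\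
    continuity (fun t => vz (f t)).

(* points just to the left of the midpoint of edge 0 -> 1 *)
Definition left_probe (p : nat -> V3) (eps : R) : V3 :=
  let m := add (vtx p 0) (vtx p 1) in
  let n := cross m (sub (vtx p 1) (vtx p 0)) in
  let w := add m (scale eps n) in
  scale (/ norm w) w.

(* open interior of the pentagon: the component of (sphere minus boundary)
   lying on the left of the boundary walk *)
Definition inside (p : nat -> V3) (x : V3) : Prop :=
  exists eps0, 0 < eps0 /\ forall eps, 0 < eps < eps0 ->
    pconn (fun y => on_sphere y /\ ~ boundary p y) x (left_probe p eps).

Definition region (p : nat -> V3) (x : V3) : Prop := inside p x \/ boundary p x.

(* interior angle at vertex i: the counterclockwise (seen from outside)
   rotation angle at vertex i from the edge towards vertex i+1 to the edge
   towards vertex i-1, in [0, 2 pi). *)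
Definition interior_angle (p : nat -> V3) (i : nat) (th : R) : Prop :=
  let V := vtx p i in
  let N := vtx p (S i) in
  let P := vtx p (i + 4) in
  let tN := sub N (scale (dot N V) V) in
  let tP := sub P (scale (dot P V) V) in
  let r := norm tN * norm tP in
  0 <= th < 2 * PI /\
  dot tN tP = r * cos th /\ dot V (cross tN tP) = r * sin th.

(* isometries of the sphere (mirror images allowed) *)
Definition isometry (g : V3 -> V3) : Prop := forall x y, dot (g x) (g y) = dot x y.

Definition img (g : V3 -> V3) (S : V3 -> Prop) (x : V3) : Prop :=
  exists y, S y /\ x = g y.

Definition tiling (p : nat -> V3) (n : nat) (g : nat -> V3 -> V3) : Prop :=
  (0 < n)%nat /\
  (forall j, (j < n)%nat -> isometry (g j)) /\
  (forall x, on_sphere x -> exists j, (j < n)%nat /\ img (g j) (region p) x) /\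
  (forall j k x, (j < n)%nat -> (k < n)%nat -> j <> k ->
      ~ (img (g j) (inside p) x /\ img (g k) (inside p) x)) /\
  (forall j k, (j < n)%nat -> (k < n)%nat -> j <> k ->
     let I := fun x => img (g j) (region p) x /\ img (g k) (region p) x in
     (forall x, ~ I x) \/
     (exists i i', (i < 5)%nat /\ (i' < 5)%nat /\
        g j (vtx p i) = g k (vtx p i') /\ forall x, I x <-> x = g j (vtx p i)) \/
     (exists i i', (i < 5)%nat /\ (i' < 5)%nat /\
        (forall x, img (g j) (edge p i) x <-> img (g k) (edge p i') x) /\
        forall x, I x <-> img (g j) (edge p i) x)).

(* Write the pentagon in the orthonormal frame (A, e, A x e), where A is the
   vertex alpha and e the unit tangent at A towards beta. As the four a-edges
   have equal length, gamma, delta and epsilon arise from alpha and beta by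
   rotations through the angles alpha, beta and gamma, so every vertex is a
   polynomial in cos a, sin a, cos (alpha/2), sin (alpha/2), cos beta,
   sin beta, cos gamma, sin gamma. The angles delta, epsilon at the ends of the
   b-edge then satisfy two polynomial relations, valid modulo the relations
   c^2 + s^2 = 1 of these four pairs and checked by a reflective normalizer.
   In half angles they read  s1 * G = 0  and  s2 * G = 0  with
   s1 = sin ((delta - epsilon)/2), s2 = sin ((delta + epsilon)/2) and G the
   claimed expression, hence G^2 = 0. *)

From Stdlib Require Import Reals ZArith List Lia Lra.
Import ListNotations.
Open Scope R_scope.

(** * Polynomial identities modulo [c^2 + s^2 = 1] *)

Record monomial := Monomial
  { exp0 : nat; exp1 : nat; exp2 : nat; exp3 : nat;
    exp4 : nat; exp5 : nat; exp6 : nat; exp7 : nat }.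

Definition monomial_compare (m m' : monomial) : comparison :=
  match Nat.compare (exp0 m) (exp0 m') with Eq =>
  match Nat.compare (exp1 m) (exp1 m') with Eq =>
  match Nat.compare (exp2 m) (exp2 m') with Eq =>
  match Nat.compare (exp3 m) (exp3 m') with Eq =>
  match Nat.compare (exp4 m) (exp4 m') with Eq =>
  match Nat.compare (exp5 m) (exp5 m') with Eq =>
  match Nat.compare (exp6 m) (exp6 m') with Eq =>
  Nat.compare (exp7 m) (exp7 m')
  | c => c end | c => c end | c => c end | c => c end
  | c => c end | c => c end | c => c end.

Lemma monomial_compare_eq m m' : monomial_compare m m' = Eq -> m = m'.
Proof.
  destruct m, m'; unfold monomial_compare; simpl.
  repeat match goal with |- context [Nat.compare ?x ?y] =>
    destruct (Nat.compare_spec x y); [subst | discriminate 1 | discriminate 1] end.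
  reflexivity.
Qed.

Definition monomial_one := Monomial 0 0 0 0 0 0 0 0.

Definition monomial_var (i : nat) : monomial :=
  match i with
  | 0 => Monomial 1 0 0 0 0 0 0 0 | 1 => Monomial 0 1 0 0 0 0 0 0
  | 2 => Monomial 0 0 1 0 0 0 0 0 | 3 => Monomial 0 0 0 1 0 0 0 0
  | 4 => Monomial 0 0 0 0 1 0 0 0 | 5 => Monomial 0 0 0 0 0 1 0 0
  | 6 => Monomial 0 0 0 0 0 0 1 0 | _ => Monomial 0 0 0 0 0 0 0 1 end.

Definition monomial_mul (m m' : monomial) : monomial :=
  Monomial (exp0 m + exp0 m') (exp1 m + exp1 m') (exp2 m + exp2 m') (exp3 m + exp3 m')
    (exp4 m + exp4 m') (exp5 m + exp5 m') (exp6 m + exp6 m') (exp7 m + exp7 m').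

(* Kept sorted by [monomial_compare] and without zero coefficients, so that
   the normal form of an expression vanishing modulo the relations is [[]];
   only the soundness of the normalization is proved below. *)
Definition poly := list (monomial * Z).

Fixpoint poly_add (P Q : poly) : poly :=
  match P with
  | [] => Q
  | (m, c) :: P' =>
    (fix add_P (Q : poly) : poly :=
       match Q with
       | [] => P
       | (m', c') :: Q' =>
         match monomial_compare m m' with
         | Eq => if Z.eqb (c + c') 0 then poly_add P' Q' else (m, c + c')%Z :: poly_add P' Q'
         | Lt => (m, c) :: poly_add P' Q
         | Gt => (m', c') :: add_P Q'
         end
       end) Q
  end.

Definition poly_opp (P : poly) : poly := map (fun mc => (fst mc, Z.opp (snd mc))) P.

Definition poly_sub (P Q : poly) : poly := poly_add P (poly_opp Q).

(* One rewriting step [x_(2k+1)^2 = 1 - x_(2k)^2], applied to the first pair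
   whose odd-indexed variable occurs squared: it returns the two monomials [u, v]
   with [m = u - v] modulo the relations. *)
Definition circle_step (m : monomial) : option (monomial * monomial) :=
  match m with Monomial e0 e1 e2 e3 e4 e5 e6 e7 =>
  match e1 with S (S k) =>
    Some (Monomial e0 k e2 e3 e4 e5 e6 e7, Monomial (S (S e0)) k e2 e3 e4 e5 e6 e7) | _ =>
  match e3 with S (S k) =>
    Some (Monomial e0 e1 e2 k e4 e5 e6 e7, Monomial e0 e1 (S (S e2)) k e4 e5 e6 e7) | _ =>
  match e5 with S (S k) =>
    Some (Monomial e0 e1 e2 e3 e4 k e6 e7, Monomial e0 e1 e2 e3 (S (S e4)) k e6 e7) | _ =>
  match e7 with S (S k) =>
    Some (Monomial e0 e1 e2 e3 e4 e5 e6 k, Monomial e0 e1 e2 e3 e4 e5 (S (S e6)) k) | _ =>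
  None end end end end end.

Fixpoint circle_reduce (fuel : nat) (m : monomial) (c : Z) : poly :=
  match fuel with
  | O => [(m, c)]
  | S fuel' =>
    match circle_step m with
    | None => [(m, c)]
    | Some (u, v) => poly_add (circle_reduce fuel' u c) (circle_reduce fuel' v (Z.opp c))
    end
  end.

Definition poly_scale_monomial (m : monomial) (c : Z) (Q : poly) : poly :=
  fold_right (fun mc acc =>
    poly_add (circle_reduce 40 (monomial_mul m (fst mc)) (c * snd mc)%Z) acc) [] Q.

Definition poly_mul (P Q : poly) : poly :=
  fold_right (fun mc acc => poly_add (poly_scale_monomial (fst mc) (snd mc) Q) acc) [] P.

Fixpoint poly_pow (P : poly) (n : nat) : poly :=
  match n with O => [(monomial_one, 1%Z)] | S n' => poly_mul P (poly_pow P n') end.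

Inductive sexpr :=
| SVar (i : nat) | SConst (z : Z) | SAdd (e f : sexpr) | SSub (e f : sexpr)
| SMul (e f : sexpr) | SOpp (e : sexpr) | SPow (e : sexpr) (n : nat) | SDot (u v : vexpr)
with vexpr :=
| VMk (e f g : sexpr) | VAdd (u v : vexpr) | VSub (u v : vexpr)
| VScale (e : sexpr) (u : vexpr) | VCross (u v : vexpr).

Scheme sexpr_ind2 := Induction for sexpr Sort Prop
with vexpr_ind2 := Induction for vexpr Sort Prop.
Combined Scheme sexpr_vexpr_ind from sexpr_ind2, vexpr_ind2.

Definition vmap2 (f : poly -> poly -> poly) (P Q : poly * poly * poly) : poly * poly * poly :=
  match P, Q with (P1, P2, P3), (Q1, Q2, Q3) => (f P1 Q1, f P2 Q2, f P3 Q3) end.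

Fixpoint snorm (e : sexpr) : poly :=
  match e with
  | SVar i => [(monomial_var i, 1%Z)]
  | SConst z => if Z.eqb z 0 then [] else [(monomial_one, z)]
  | SAdd e f => poly_add (snorm e) (snorm f)
  | SSub e f => poly_sub (snorm e) (snorm f)
  | SMul e f => poly_mul (snorm e) (snorm f)
  | SOpp e => poly_opp (snorm e)
  | SPow e n => poly_pow (snorm e) n
  | SDot u v => match vnorm u, vnorm v with (P1, P2, P3), (Q1, Q2, Q3) =>
      poly_add (poly_add (poly_mul P1 Q1) (poly_mul P2 Q2)) (poly_mul P3 Q3) end
  end
with vnorm (u : vexpr) : poly * poly * poly :=
  match u with
  | VMk e f g => (snorm e, snorm f, snorm g)
  | VAdd u v => vmap2 poly_add (vnorm u) (vnorm v)
  | VSub u v => vmap2 poly_sub (vnorm u) (vnorm v)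
  | VScale e u => let K := snorm e in
      match vnorm u with (P1, P2, P3) => (poly_mul K P1, poly_mul K P2, poly_mul K P3) end
  | VCross u v => match vnorm u, vnorm v with (P1, P2, P3), (Q1, Q2, Q3) =>
      (poly_sub (poly_mul P2 Q3) (poly_mul P3 Q2), poly_sub (poly_mul P3 Q1) (poly_mul P1 Q3),
       poly_sub (poly_mul P1 Q2) (poly_mul P2 Q1)) end
  end.

Lemma pow_SS x n : x ^ S (S n) = x * x * x ^ n.
Proof. simpl; ring. Qed.

Section CircleRing.
Variables x0 x1 x2 x3 x4 x5 x6 x7 : R.

Definition monomial_eval (m : monomial) : R :=
  x0 ^ exp0 m * x1 ^ exp1 m * x2 ^ exp2 m * x3 ^ exp3 m
  * x4 ^ exp4 m * x5 ^ exp5 m * x6 ^ exp6 m * x7 ^ exp7 m.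

Fixpoint poly_eval (P : poly) : R :=
  match P with [] => 0 | (m, c) :: P' => IZR c * monomial_eval m + poly_eval P' end.

Fixpoint sexpr_eval (e : sexpr) : R :=
  match e with
  | SVar i => match i with
      | 0 => x0 | 1 => x1 | 2 => x2 | 3 => x3 | 4 => x4 | 5 => x5 | 6 => x6 | _ => x7 end
  | SConst z => IZR z
  | SAdd e f => sexpr_eval e + sexpr_eval f
  | SSub e f => sexpr_eval e - sexpr_eval f
  | SMul e f => sexpr_eval e * sexpr_eval f
  | SOpp e => - sexpr_eval e
  | SPow e n => sexpr_eval e ^ n
  | SDot u v => dot (vexpr_eval u) (vexpr_eval v)
  end
with vexpr_eval (u : vexpr) : V3 :=
  match u with
  | VMk e f g => mkV (sexpr_eval e) (sexpr_eval f) (sexpr_eval g)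
  | VAdd u v => add (vexpr_eval u) (vexpr_eval v)
  | VSub u v => sub (vexpr_eval u) (vexpr_eval v)
  | VScale e u => scale (sexpr_eval e) (vexpr_eval u)
  | VCross u v => cross (vexpr_eval u) (vexpr_eval v)
  end.

Lemma poly_add_eval P Q : poly_eval (poly_add P Q) = poly_eval P + poly_eval Q.
Proof.
  revert Q; induction P as [|[m c] P IHP]; intro Q; simpl; [ring|].
  induction Q as [|[m' c'] Q IHQ]; simpl; [ring|].
  destruct (monomial_compare m m') eqn:Hcmp; simpl.
  - apply monomial_compare_eq in Hcmp as <-.
    destruct (Z.eqb_spec (c + c') 0) as [Hz|Hz]; simpl; rewrite IHP.
    + replace (IZR c') with (- IZR c) by (rewrite <- opp_IZR; f_equal; lia). ring.
    + rewrite plus_IZR; ring.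
  - rewrite IHP; simpl; ring.
  - rewrite IHQ; ring.
Qed.

Lemma poly_opp_eval P : poly_eval (poly_opp P) = - poly_eval P.
Proof. induction P as [|[m c] P IH]; simpl; [ring|]. rewrite IH, opp_IZR; ring. Qed.

Lemma poly_sub_eval P Q : poly_eval (poly_sub P Q) = poly_eval P - poly_eval Q.
Proof. unfold poly_sub; rewrite poly_add_eval, poly_opp_eval; ring. Qed.

Lemma monomial_mul_eval m m' :
  monomial_eval (monomial_mul m m') = monomial_eval m * monomial_eval m'.
Proof. destruct m, m'; unfold monomial_eval, monomial_mul; simpl; rewrite !pow_add; ring. Qed.

Hypothesis circle01 : x0 ^ 2 + x1 ^ 2 = 1.
Hypothesis circle23 : x2 ^ 2 + x3 ^ 2 = 1.
Hypothesis circle45 : x4 ^ 2 + x5 ^ 2 = 1.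
Hypothesis circle67 : x6 ^ 2 + x7 ^ 2 = 1.

Local Ltac eliminate_square c s circle :=
  intros [= <- <-]; cbn [exp0 exp1 exp2 exp3 exp4 exp5 exp6 exp7]; rewrite !pow_SS;
  replace (s * s) with (1 - c * c) by (rewrite <- circle; ring); ring.

Lemma circle_step_eval m u v :
  circle_step m = Some (u, v) -> monomial_eval m = monomial_eval u - monomial_eval v.
Proof.
  destruct m as [e0 e1 e2 e3 e4 e5 e6 e7]; unfold circle_step, monomial_eval; simpl.
  destruct e1 as [|[|k]]; [| | eliminate_square x0 x1 circle01];
  (destruct e3 as [|[|k]]; [| | eliminate_square x2 x3 circle23]);
  (destruct e5 as [|[|k]]; [| | eliminate_square x4 x5 circle45]);
  (destruct e7 as [|[|k]]; [discriminate | discriminate | eliminate_square x6 x7 circle67]).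
Qed.

Lemma circle_reduce_eval fuel m c :
  poly_eval (circle_reduce fuel m c) = IZR c * monomial_eval m.
Proof.
  revert m c; induction fuel as [|fuel IH]; intros m c; simpl; [ring|].
  destruct (circle_step m) as [[u v]|] eqn:Hstep; simpl; [|ring].
  rewrite poly_add_eval, !IH, (circle_step_eval _ _ _ Hstep), opp_IZR; ring.
Qed.

Lemma poly_scale_monomial_eval m c Q :
  poly_eval (poly_scale_monomial m c Q) = IZR c * monomial_eval m * poly_eval Q.
Proof.
  induction Q as [|[m' c'] Q IH]; unfold poly_scale_monomial in *;
    cbn [fold_right fst snd poly_eval]; [ring|].
  rewrite poly_add_eval, IH, circle_reduce_eval, monomial_mul_eval, mult_IZR; ring.
Qed.

Lemma poly_mul_eval P Q : poly_eval (poly_mul P Q) = poly_eval P * poly_eval Q.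
Proof.
  induction P as [|[m c] P IH]; unfold poly_mul in *; cbn [fold_right fst snd poly_eval]; [ring|].
  rewrite poly_add_eval, IH, poly_scale_monomial_eval; ring.
Qed.

Lemma poly_pow_eval P n : poly_eval (poly_pow P n) = poly_eval P ^ n.
Proof.
  induction n as [|n IH]; cbn [poly_pow pow].
  - cbn [poly_eval]; unfold monomial_eval; simpl; ring.
  - rewrite poly_mul_eval, IH; ring.
Qed.

Lemma norm_eval :
  (forall e, poly_eval (snorm e) = sexpr_eval e) /\
  (forall u, match vnorm u with (P1, P2, P3) =>
     mkV (poly_eval P1) (poly_eval P2) (poly_eval P3) = vexpr_eval u end).
Proof.
  apply sexpr_vexpr_ind; intros; cbn [snorm vnorm sexpr_eval vexpr_eval].
  - destruct i as [|[|[|[|[|[|[|[|i]]]]]]]]; cbn; unfold monomial_eval; simpl; ring.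
  - destruct (Z.eqb_spec z 0) as [->|]; [reflexivity|cbn; unfold monomial_eval; simpl; ring].
  - rewrite poly_add_eval; congruence.
  - rewrite poly_sub_eval; congruence.
  - rewrite poly_mul_eval; congruence.
  - rewrite poly_opp_eval; congruence.
  - rewrite poly_pow_eval; congruence.
  - destruct (vnorm u) as [[P1 P2] P3], (vnorm v) as [[Q1 Q2] Q3].
    rewrite <- H, <- H0, !poly_add_eval, !poly_mul_eval; unfold dot; cbn [vx vy vz]; ring.
  - congruence.
  - destruct (vnorm u) as [[P1 P2] P3], (vnorm v) as [[Q1 Q2] Q3]; cbn [vmap2].
    rewrite <- H, <- H0, !poly_add_eval; reflexivity.
  - destruct (vnorm u) as [[P1 P2] P3], (vnorm v) as [[Q1 Q2] Q3]; cbn [vmap2].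
    rewrite <- H, <- H0, !poly_sub_eval; reflexivity.
  - destruct (vnorm u) as [[P1 P2] P3].
    rewrite <- H, <- H0, !poly_mul_eval; reflexivity.
  - destruct (vnorm u) as [[P1 P2] P3], (vnorm v) as [[Q1 Q2] Q3].
    rewrite <- H, <- H0, !poly_sub_eval, !poly_mul_eval; reflexivity.
Qed.

Lemma sexpr_eval_eq e f : snorm (SSub e f) = [] -> sexpr_eval e = sexpr_eval f.
Proof.
  intro Hnorm. apply Rminus_diag_uniq.
  change (sexpr_eval (SSub e f) = 0). rewrite <- (proj1 norm_eval), Hnorm. reflexivity.
Qed.

End CircleRing.

Ltac reify_sexpr x0 x1 x2 x3 x4 x5 x6 x7 t :=
  let rs := reify_sexpr x0 x1 x2 x3 x4 x5 x6 x7 in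
  let rv := reify_vexpr x0 x1 x2 x3 x4 x5 x6 x7 in
  lazymatch t with
  | ?e + ?f => let e' := rs e in let f' := rs f in constr:(SAdd e' f')
  | ?e - ?f => let e' := rs e in let f' := rs f in constr:(SSub e' f')
  | ?e * ?f => let e' := rs e in let f' := rs f in constr:(SMul e' f')
  | - ?e => let e' := rs e in constr:(SOpp e')
  | ?e ^ ?n => let e' := rs e in constr:(SPow e' n)
  | dot ?u ?v => let u' := rv u in let v' := rv v in constr:(SDot u' v')
  | IZR ?z => constr:(SConst z)
  | R0 => constr:(SConst 0)
  | R1 => constr:(SConst 1)
  | x0 => constr:(SVar 0) | x1 => constr:(SVar 1) | x2 => constr:(SVar 2)
  | x3 => constr:(SVar 3) | x4 => constr:(SVar 4) | x5 => constr:(SVar 5)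
  | x6 => constr:(SVar 6) | x7 => constr:(SVar 7)
  | _ => fail 100 "reify_sexpr: unsupported term" t
  end
with reify_vexpr x0 x1 x2 x3 x4 x5 x6 x7 t :=
  let rs := reify_sexpr x0 x1 x2 x3 x4 x5 x6 x7 in
  let rv := reify_vexpr x0 x1 x2 x3 x4 x5 x6 x7 in
  lazymatch t with
  | add ?u ?v => let u' := rv u in let v' := rv v in constr:(VAdd u' v')
  | sub ?u ?v => let u' := rv u in let v' := rv v in constr:(VSub u' v')
  | cross ?u ?v => let u' := rv u in let v' := rv v in constr:(VCross u' v')
  | scale ?e ?u => let e' := rs e in let u' := rv u in constr:(VScale e' u')
  | mkV ?e ?f ?g => let e' := rs e in let f' := rs f in let g' := rs g in constr:(VMk e' f' g')
  | _ => fail 100 "reify_vexpr: unsupported term" t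
  end.

(* Proves [l = r] for polynomial expressions in [x0, ..., x7] built with vector
   operations, modulo the four relations [x_(2k)^2 + x_(2k+1)^2 = 1]. *)
Ltac circle_ring x0 x1 x2 x3 x4 x5 x6 x7 c01 c23 c45 c67 :=
  lazymatch goal with |- ?l = ?r =>
    let l' := reify_sexpr x0 x1 x2 x3 x4 x5 x6 x7 l in
    let r' := reify_sexpr x0 x1 x2 x3 x4 x5 x6 x7 r in
    change (sexpr_eval x0 x1 x2 x3 x4 x5 x6 x7 l' = sexpr_eval x0 x1 x2 x3 x4 x5 x6 x7 r');
    apply (sexpr_eval_eq x0 x1 x2 x3 x4 x5 x6 x7 c01 c23 c45 c67);
    vm_compute; reflexivity
  end.

(** * Spherical geometry *)

Lemma V3_eq u v : vx u = vx v -> vy u = vy v -> vz u = vz v -> u = v.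
Proof. destruct u, v; simpl; intros -> -> ->; reflexivity. Qed.

Lemma dot_comm u v : dot u v = dot v u.
Proof. unfold dot; ring. Qed.

Lemma dist_sq_pos u v : u <> v -> 0 < dot (sub u v) (sub u v).
Proof.
  intro Huv. apply Rnot_le_lt; intro Hle; apply Huv.
  destruct u as [x y z], v as [x' y' z']; unfold dot, sub in Hle; simpl in Hle.
  pose proof (Rle_0_sqr (x - x')); pose proof (Rle_0_sqr (y - y'));
  pose proof (Rle_0_sqr (z - z')).
  assert (Hx : x - x' = 0) by (apply Rsqr_0_uniq; unfold Rsqr in *; lra).
  assert (Hy : y - y' = 0) by (apply Rsqr_0_uniq; unfold Rsqr in *; lra).
  assert (Hz : z - z' = 0) by (apply Rsqr_0_uniq; unfold Rsqr in *; lra).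
  f_equal; lra.
Qed.

Lemma dot_sq_lt_1 u v :
  on_sphere u -> on_sphere v -> u <> v -> v <> opp u -> dot u v ^ 2 < 1.
Proof.
  unfold on_sphere; intros Hu Hv Huv Hopp.
  assert (Hminus := dist_sq_pos u v Huv).
  assert (Hplus : 0 < dot (sub u (opp v)) (sub u (opp v))).
  { apply dist_sq_pos; intros ->; apply Hopp.
    unfold opp, scale; apply V3_eq; simpl; ring. }
  replace (dot (sub u v) (sub u v)) with (dot u u + dot v v - 2 * dot u v) in Hminus
    by (unfold dot; simpl; ring).
  replace (dot (sub u (opp v)) (sub u (opp v))) with (dot u u + dot v v + 2 * dot u v)
    in Hplus by (unfold dot, opp, scale; simpl; ring).
  nra.
Qed.

Lemma cos_sdist u v :
  on_sphere u -> on_sphere v -> u <> v -> v <> opp u -> cos (sdist u v) = dot u v.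
Proof.
  intros Hu Hv Huv Hopp. pose proof (dot_sq_lt_1 u v Hu Hv Huv Hopp).
  unfold sdist; rewrite cos_acos; [reflexivity | nra].
Qed.

Definition tangent (V N : V3) : V3 := sub N (scale (dot N V) V).

Definition rotate (V N : V3) (c s : R) : V3 :=
  add (scale (dot N V) V) (add (scale c (tangent V N)) (scale s (cross V (tangent V N)))).

Definition angle_cos (V N P : V3) : R := dot (tangent V N) (tangent V P).
Definition angle_sin (V N P : V3) : R := dot V (cross (tangent V N) (tangent V P)).

(* [interior_angle p i th] is [vertex_angle (vtx p i) (vtx p (S i)) (vtx p (i + 4)) th]
   up to conversion. *)
Definition vertex_angle (V N P : V3) (th : R) : Prop :=
  let r := norm (tangent V N) * norm (tangent V P) in
  0 <= th < 2 * PI /\ angle_cos V N P = r * cos th /\ angle_sin V N P = r * sin th.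

Lemma tangent_sq V N :
  on_sphere V -> on_sphere N -> dot (tangent V N) (tangent V N) = 1 - dot N V ^ 2.
Proof.
  unfold on_sphere, tangent; intros HV HN.
  transitivity (dot N N - 2 * dot N V ^ 2 + dot N V ^ 2 * dot V V);
    [unfold dot; simpl; ring | rewrite HN, HV; ring].
Qed.

Lemma dot_tangent V N : on_sphere V -> dot V (tangent V N) = 0.
Proof.
  unfold on_sphere, tangent; intro HV.
  transitivity (dot V N - dot N V * dot V V); [unfold dot; simpl; ring|].
  rewrite HV, dot_comm; ring.
Qed.

Lemma angle_cos_sym V N P : angle_cos V P N = angle_cos V N P.
Proof. apply dot_comm. Qed.

Lemma angle_sin_anti V N P : angle_sin V P N = - angle_sin V N P.
Proof. unfold angle_sin, dot, cross; simpl; ring. Qed.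

Lemma vertex_angle_cos_sin V N P th :
  on_sphere V -> on_sphere N -> on_sphere P -> vertex_angle V N P th ->
  angle_cos V N P = sqrt (1 - dot N V ^ 2) * sqrt (1 - dot P V ^ 2) * cos th /\
  angle_sin V N P = sqrt (1 - dot N V ^ 2) * sqrt (1 - dot P V ^ 2) * sin th.
Proof.
  intros HV HN HP [_ [Hcos Hsin]]. unfold norm in Hcos, Hsin.
  rewrite !tangent_sq in Hcos, Hsin by assumption. split; assumption.
Qed.

Lemma orthogonal_decomposition V t x :
  dot V V = 1 -> dot V t = 0 -> dot V x = 0 ->
  scale (dot t t) x = add (scale (dot t x) t) (scale (dot V (cross t x)) (cross V t)).
Proof.
  intros HV Ht Hx.
  (* the Gram expansion of [x] along [V], [t], [V x t], valid for any [V, t] *)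
  assert (gram : forall f : V3 -> R, f = vx \/ f = vy \/ f = vz ->
    (dot V V * dot t t - dot V t ^ 2) * f x =
    (dot t t * dot V x - dot V t * dot t x) * f V
    + (dot V V * dot t x - dot V t * dot V x) * f t + dot V (cross t x) * f (cross V t)).
  { intros f [-> | [-> | ->]]; unfold dot, cross; simpl; ring. }
  rewrite HV, Ht, Hx in gram.
  apply V3_eq; simpl;
    [ specialize (gram vx (or_introl eq_refl))
    | specialize (gram vy (or_intror (or_introl eq_refl)))
    | specialize (gram vz (or_intror (or_intror eq_refl))) ];
    simpl in gram; lra.
Qed.

Lemma rotate_of_angle V N P c s :
  on_sphere V -> on_sphere N -> on_sphere P -> dot P V = dot N V -> dot N V ^ 2 < 1 ->
  angle_cos V N P = (1 - dot N V ^ 2) * c -> angle_sin V N P = (1 - dot N V ^ 2) * s ->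
  P = rotate V N c s.
Proof.
  intros HV HN HP HPV Hlt Hcos Hsin.
  set (k := 1 - dot N V ^ 2) in *.
  pose proof (orthogonal_decomposition V (tangent V N) (tangent V P) HV
    (dot_tangent V N HV) (dot_tangent V P HV)) as Hdec.
  fold (angle_cos V N P) (angle_sin V N P) in Hdec.
  rewrite tangent_sq, Hcos, Hsin in Hdec by assumption. fold k in Hdec.
  unfold rotate; rewrite <- HPV.
  assert (Hk : k <> 0) by (unfold k; lra).
  apply V3_eq; simpl;
    [apply (f_equal vx) in Hdec | apply (f_equal vy) in Hdec | apply (f_equal vz) in Hdec];
    unfold tangent in *; simpl in *; (apply (Rmult_eq_reg_l k); [lra | exact Hk]).
Qed.

Lemma vertex_angle_rotate V N P th :
  on_sphere V -> on_sphere N -> on_sphere P -> dot P V = dot N V -> dot N V ^ 2 < 1 ->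
  vertex_angle V N P th -> P = rotate V N (cos th) (sin th).
Proof.
  intros HV HN HP HPV Hlt Hang.
  destruct (vertex_angle_cos_sin V N P th HV HN HP Hang) as [Hcos Hsin].
  rewrite HPV, sqrt_sqrt in Hcos, Hsin by lra.
  apply rotate_of_angle; assumption.
Qed.

Lemma vertex_angle_rotate_back V N P th :
  on_sphere V -> on_sphere N -> on_sphere P -> dot P V = dot N V -> dot N V ^ 2 < 1 ->
  vertex_angle V N P th -> N = rotate V P (cos th) (- sin th).
Proof.
  intros HV HN HP HPV Hlt Hang.
  destruct (vertex_angle_cos_sin V N P th HV HN HP Hang) as [Hcos Hsin].
  rewrite HPV, sqrt_sqrt in Hcos, Hsin by lra.
  apply rotate_of_angle; rewrite ?HPV; try assumption; try reflexivity.
  - rewrite angle_cos_sym; exact Hcos.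
  - rewrite angle_sin_anti, Hsin; ring.
Qed.

Section Frame.
Variables A e : V3.
Hypotheses (HA : dot A A = 1) (He : dot e e = 1) (HAe : dot A e = 0).

Definition frame (u : V3) : V3 :=
  add (add (scale (vx u) A) (scale (vy u) e)) (scale (vz u) (cross A e)).

Lemma frame_add u v : add (frame u) (frame v) = frame (add u v).
Proof. unfold frame; apply V3_eq; simpl; ring. Qed.

Lemma frame_sub u v : sub (frame u) (frame v) = frame (sub u v).
Proof. unfold frame; apply V3_eq; simpl; ring. Qed.

Lemma frame_scale s u : scale s (frame u) = frame (scale s u).
Proof. unfold frame; apply V3_eq; simpl; ring. Qed.

Lemma frame_dot u v : dot (frame u) (frame v) = dot u v.
Proof.
  transitivity (vx u * vx v * dot A A + vy u * vy v * dot e e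
    + vz u * vz v * (dot A A * dot e e - dot A e ^ 2) + (vx u * vy v + vy u * vx v) * dot A e);
    [unfold frame, dot, cross; simpl; ring|].
  rewrite HA, He, HAe; unfold dot; ring.
Qed.

Lemma frame_cross u v : cross (frame u) (frame v) = frame (cross u v).
Proof.
  transitivity (add (add
    (scale ((vy u * vz v - vz u * vy v) * dot e e - (vz u * vx v - vx u * vz v) * dot A e) A)
    (scale ((vz u * vx v - vx u * vz v) * dot A A - (vy u * vz v - vz u * vy v) * dot A e) e))
    (scale (vx u * vy v - vy u * vx v) (cross A e)));
    [unfold frame, dot, cross; apply V3_eq; simpl; ring|].
  rewrite HA, He, HAe; unfold frame; apply V3_eq; simpl; ring.
Qed.

Local Ltac push_frame :=
  repeat first [ rewrite frame_dot | rewrite frame_cross | rewrite frame_add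
               | rewrite frame_sub | rewrite frame_scale ].

Lemma frame_tangent V N : tangent (frame V) (frame N) = frame (tangent V N).
Proof. unfold tangent; push_frame; reflexivity. Qed.

Lemma frame_rotate V N c s : rotate (frame V) (frame N) c s = frame (rotate V N c s).
Proof. unfold rotate; rewrite frame_tangent; push_frame; reflexivity. Qed.

Lemma frame_angle_cos V N P : angle_cos (frame V) (frame N) (frame P) = angle_cos V N P.
Proof. unfold angle_cos; rewrite !frame_tangent; apply frame_dot. Qed.

Lemma frame_angle_sin V N P : angle_sin (frame V) (frame N) (frame P) = angle_sin V N P.
Proof. unfold angle_sin; rewrite !frame_tangent, frame_cross; apply frame_dot. Qed.

End Frame.

Lemma half_angle_relation Kt Kq x y :
  Kt * (1 - cos (x - y)) = Kq * (cos y - cos x) ->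
  Kt * (cos y - cos x) = Kq * (1 - cos (x + y)) ->
  Kt * sin ((x - y) / 2) = Kq * sin ((x + y) / 2).
Proof.
  intros Hminus Hplus.
  set (s1 := sin ((x - y) / 2)); set (s2 := sin ((x + y) / 2)).
  assert (Hs11 : 1 - cos (x - y) = 2 * s1 * s1).
  { replace (x - y) with (2 * ((x - y) / 2)) by field. rewrite cos_2a_sin; unfold s1; ring. }
  assert (Hs22 : 1 - cos (x + y) = 2 * s2 * s2).
  { replace (x + y) with (2 * ((x + y) / 2)) by field. rewrite cos_2a_sin; unfold s2; ring. }
  assert (Hs12 : cos y - cos x = 2 * s1 * s2).
  { replace x with ((x + y) / 2 + (x - y) / 2) at 1 by field.
    replace y with ((x + y) / 2 - (x - y) / 2) at 1 by field.
    rewrite cos_minus, cos_plus; unfold s1, s2; ring. }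
  set (G := Kt * s1 - Kq * s2).
  assert (H1 : s1 * G = 0) by (unfold G; nra).
  assert (H2 : s2 * G = 0) by (unfold G; nra).
  assert (HG : G * G = 0).
  { transitivity (Kt * (s1 * G) - Kq * (s2 * G)); [unfold G; ring | rewrite H1, H2; ring]. }
  apply Rmult_integral in HG; unfold G in HG; lra.
Qed.

(** * The a^4b-pentagon *)

(* The vertices alpha, beta, gamma, delta, epsilon of an a^4b-pentagon in the
   frame (alpha, e, alpha x e): [ca, sa] are [cos a, sin a], [ch, sh] the cosine
   and sine of alpha/2, and [cB, sB], [cG, sG] those of beta and gamma. *)
Definition model_A : V3 := mkV 1 0 0.
Definition model_B (ca sa : R) : V3 := mkV ca sa 0.
Definition model_C (ca sa ch sh : R) : V3 :=
  rotate model_A (model_B ca sa) (ch * ch - sh * sh) (2 * sh * ch).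
Definition model_D (ca sa cB sB : R) : V3 := rotate (model_B ca sa) model_A cB (- sB).
Definition model_E (ca sa ch sh cG sG : R) : V3 := rotate (model_C ca sa ch sh) model_A cG sG.

(* With [(xd, yd) = r (cos delta, sin delta)], [(xe, ye) = r (cos epsilon, sin epsilon)]
   and [r2 = r^2], these are the hypotheses of [half_angle_relation] times [r^3], [r^2]. *)
Lemma model_angle_relations ca sa ch sh cB sB cG sG :
  ca ^ 2 + sa ^ 2 = 1 -> ch ^ 2 + sh ^ 2 = 1 -> cB ^ 2 + sB ^ 2 = 1 -> cG ^ 2 + sG ^ 2 = 1 ->
  let B := model_B ca sa in let C := model_C ca sa ch sh in
  let D := model_D ca sa cB sB in let E := model_E ca sa ch sh cG sG in
  let xd := angle_cos D E B in let yd := angle_sin D E B in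
  let xe := angle_cos E C D in let ye := angle_sin E C D in
  let r2 := (1 - ca ^ 2) * (1 - dot E D ^ 2) in
  let K := (1 - cB) * (yd * ch - xd * sh) - (1 - cG) * (ye * ch - xe * sh) in
  let Kq := (1 - (cB * cG + sB * sG)) * sh in
  K * (r2 - xd * xe - yd * ye) = Kq * r2 * (xe - xd) /\
  K * (xe - xd) = Kq * (r2 - xd * xe + yd * ye).
Proof.
  intros Ha Hh HB HG; cbv zeta.
  unfold angle_cos, angle_sin, model_E, model_D, model_C, model_B, model_A, rotate, tangent.
  split; circle_ring ca sa ch sh cB sB cG sG Ha Hh HB HG.
Qed.

Lemma a4b_model_frame A B C D E ca al be ga :
  on_sphere A -> on_sphere B -> on_sphere C -> on_sphere D -> on_sphere E ->
  dot A B = ca -> dot B D = ca -> dot E C = ca -> dot C A = ca -> ca ^ 2 < 1 ->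
  vertex_angle A B C al -> vertex_angle B D A be -> vertex_angle C A E ga ->
  let sa := sqrt (1 - ca ^ 2) in let ch := cos (al / 2) in let sh := sin (al / 2) in
  exists e, dot e e = 1 /\ dot A e = 0 /\
    A = frame A e model_A /\ B = frame A e (model_B ca sa) /\
    C = frame A e (model_C ca sa ch sh) /\ D = frame A e (model_D ca sa (cos be) (sin be)) /\
    E = frame A e (model_E ca sa ch sh (cos ga) (sin ga)).
Proof.
  intros HA HB HC HD HE HAB HBD HEC HCA Hca HangA HangB HangC sa ch sh.
  assert (Hsa : sa * sa = 1 - ca ^ 2) by (apply sqrt_sqrt; lra).
  assert (Hsa0 : 0 < sa) by (apply sqrt_lt_R0; lra).
  exists (scale (/ sa) (tangent A B)).
  assert (He : dot (scale (/ sa) (tangent A B)) (scale (/ sa) (tangent A B)) = 1).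
  { transitivity (/ sa * / sa * dot (tangent A B) (tangent A B)); [unfold dot; simpl; ring|].
    rewrite tangent_sq, dot_comm, HAB by assumption. rewrite <- Hsa; field; lra. }
  assert (HAe : dot A (scale (/ sa) (tangent A B)) = 0).
  { transitivity (/ sa * dot A (tangent A B)); [unfold dot; simpl; ring|].
    rewrite dot_tangent by assumption; ring. }
  set (e := scale (/ sa) (tangent A B)) in *.
  assert (FA : A = frame A e model_A) by (unfold frame; apply V3_eq; simpl; ring).
  assert (FB : B = frame A e (model_B ca sa)).
  { unfold frame, e, tangent; rewrite dot_comm, HAB; apply V3_eq; simpl; field; lra. }
  assert (Hdouble : cos al = ch * ch - sh * sh /\ sin al = 2 * sh * ch).
  { unfold ch, sh; rewrite <- cos_2a, <- sin_2a.
    replace (2 * (al / 2)) with al by field; split; reflexivity. }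
  assert (FC : C = frame A e (model_C ca sa ch sh)).
  { transitivity (rotate (frame A e model_A) (frame A e (model_B ca sa)) (cos al) (sin al)).
    - rewrite <- FA, <- FB. apply vertex_angle_rotate; try assumption.
      + rewrite HCA, dot_comm, HAB; reflexivity.
      + rewrite dot_comm, HAB; assumption.
    - rewrite frame_rotate by assumption. destruct Hdouble as [-> ->]; reflexivity. }
  assert (FD : D = frame A e (model_D ca sa (cos be) (sin be))).
  { transitivity (rotate (frame A e (model_B ca sa)) (frame A e model_A) (cos be) (- sin be)).
    - rewrite <- FA, <- FB. apply vertex_angle_rotate_back; try assumption.
      + rewrite HAB, dot_comm, HBD; reflexivity.
      + rewrite dot_comm, HBD; assumption.
    - rewrite frame_rotate by assumption; reflexivity. }
  assert (FE : E = frame A e (model_E ca sa ch sh (cos ga) (sin ga))).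
  { transitivity (rotate (frame A e (model_C ca sa ch sh)) (frame A e model_A) (cos ga) (sin ga)).
    - rewrite <- FA, <- FC. apply vertex_angle_rotate; try assumption.
      + rewrite HEC, dot_comm, HCA; reflexivity.
      + rewrite dot_comm, HCA; assumption.
    - rewrite frame_rotate by assumption; reflexivity. }
  repeat split; assumption.
Qed.

Theorem a4b_angle_identity A B C D E ca al be ga de ep :
  on_sphere A -> on_sphere B -> on_sphere C -> on_sphere D -> on_sphere E ->
  dot A B = ca -> dot B D = ca -> dot E C = ca -> dot C A = ca ->
  ca ^ 2 < 1 -> dot D E ^ 2 < 1 ->
  vertex_angle A B C al -> vertex_angle B D A be -> vertex_angle C A E ga ->
  vertex_angle D E B de -> vertex_angle E C D ep ->
  ((1 - cos be) * sin (de - al / 2) - (1 - cos ga) * sin (ep - al / 2))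
    * sin ((de - ep) / 2)
  - (1 - cos (be - ga)) * sin (al / 2) * sin ((de + ep) / 2) = 0.
Proof.
  intros HA HB HC HD HE HAB HBD HEC HCA Hca Hcb HangA HangB HangC HangD HangE.
  destruct (a4b_model_frame A B C D E ca al be ga HA HB HC HD HE HAB HBD HEC HCA Hca
              HangA HangB HangC) as (e & He & HAe & _ & FB & FC & FD & FE).
  destruct (vertex_angle_cos_sin D E B de HD HE HB HangD) as [HxD HyD].
  destruct (vertex_angle_cos_sin E C D ep HE HC HD HangE) as [HxE HyE].
  rewrite (dot_comm E D), HBD, (Rmult_comm (sqrt _)) in HxD, HyD.
  rewrite (dot_comm C E), HEC in HxE, HyE.
  set (r := sqrt (1 - ca ^ 2) * sqrt (1 - dot D E ^ 2)) in *.
  assert (Hr : 0 < r) by (apply Rmult_lt_0_compat; apply sqrt_lt_R0; lra).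
  assert (Hrr : (1 - ca ^ 2) * (1 - dot D E ^ 2) = r * r)
    by (unfold r; rewrite <- sqrt_mult, sqrt_sqrt by nra; reflexivity).
  clearbody r.
  rewrite (dot_comm D E) in Hrr.
  rewrite FD, FE, FB, frame_angle_cos in HxD by assumption.
  rewrite FD, FE, FB, frame_angle_sin in HyD by assumption.
  rewrite FE, FC, FD, frame_angle_cos in HxE by assumption.
  rewrite FE, FC, FD, frame_angle_sin in HyE by assumption.
  rewrite FE, FD, frame_dot in Hrr by assumption.
  assert (circle : forall x, cos x ^ 2 + sin x ^ 2 = 1)
    by (intro x; rewrite <- (sin2_cos2 x); unfold Rsqr; ring).
  assert (Hsa : ca ^ 2 + sqrt (1 - ca ^ 2) ^ 2 = 1)
    by (rewrite pow2_sqrt; [ring | lra]).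
  destruct (model_angle_relations ca (sqrt (1 - ca ^ 2)) (cos (al / 2)) (sin (al / 2))
              (cos be) (sin be) (cos ga) (sin ga) Hsa (circle _) (circle _) (circle _))
    as [Hminus Hplus].
  rewrite HxD, HyD, HxE, HyE, Hrr in Hminus, Hplus.
  apply Rminus_diag_eq, half_angle_relation.
  - apply (Rmult_eq_reg_l (r * r * r));
      [| apply Rgt_not_eq; repeat apply Rmult_lt_0_compat; exact Hr].
    rewrite !sin_minus, !cos_minus. nra.
  - apply (Rmult_eq_reg_l (r * r));
      [| apply Rgt_not_eq; repeat apply Rmult_lt_0_compat; exact Hr].
    rewrite !sin_minus, !cos_minus, cos_plus. nra.
Qed.

Lemma simple_pentagon_edge p i :
  simple_pentagon p -> (i < 5)%nat ->
  on_sphere (vtx p i) /\ dot (vtx p i) (vtx p (S i)) ^ 2 < 1 /\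
  cos (sdist (vtx p i) (vtx p (S i))) = dot (vtx p i) (vtx p (S i)).
Proof.
  intros (Hsphere & Hdistinct & Hantipodal & _) Hi.
  assert (Hnext : vtx p (S i) = vtx p (S i mod 5))
    by (unfold vtx; rewrite Nat.Div0.mod_mod; reflexivity).
  assert (Hj : (S i mod 5 < 5)%nat) by (apply Nat.mod_upper_bound; lia).
  assert (Hij : vtx p i <> vtx p (S i)).
  { rewrite Hnext; apply Hdistinct; try assumption.
    destruct (Nat.eq_dec i 4) as [->|]; [discriminate|rewrite Nat.mod_small; lia]. }
  assert (Hu : on_sphere (vtx p i)) by (apply Hsphere; assumption).
  assert (Hv : on_sphere (vtx p (S i))) by (rewrite Hnext; apply Hsphere; assumption).
  split; [|split].
  - exact Hu.
  - apply dot_sq_lt_1; auto.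
  - apply cos_sdist; auto.
Qed.

Theorem mainTheorem2 (p : nat -> V3) (a b : R) (n : nat) (g : nat -> V3 -> V3)
  (al be ga de ep : R) :
  a4b_pentagon p a b ->
  tiling p n g ->
  interior_angle p 0 al -> interior_angle p 1 be -> interior_angle p 4 ga ->
  interior_angle p 2 de -> interior_angle p 3 ep ->
  ((1 - cos be) * sin (de - al / 2) - (1 - cos ga) * sin (ep - al / 2))
    * sin ((de - ep) / 2)
  - (1 - cos (be - ga)) * sin (al / 2) * sin ((de + ep) / 2) = 0.
Proof.
  intros [Hsimple (Hab & Hbd & _ & Hec & Hca & _)] _ Hal Hbe Hga Hde Hep.
  destruct (simple_pentagon_edge p 0 Hsimple) as (U0 & L01 & C01); [lia|].
  destruct (simple_pentagon_edge p 1 Hsimple) as (U1 & _ & C12); [lia|].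
  destruct (simple_pentagon_edge p 2 Hsimple) as (U2 & L23 & _); [lia|].
  destruct (simple_pentagon_edge p 3 Hsimple) as (U3 & _ & C34); [lia|].
  destruct (simple_pentagon_edge p 4 Hsimple) as (U4 & _ & C40); [lia|].
  change (vtx p 5) with (vtx p 0) in C40.
  rewrite Hab in C01; rewrite Hbd in C12; rewrite Hec in C34; rewrite Hca in C40.
  rewrite <- C01 in L01.
  apply (a4b_angle_identity (vtx p 0) (vtx p 1) (vtx p 4) (vtx p 2) (vtx p 3) (cos a));
    auto.
Qed.
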